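(* Let $c\in\{0,1\}$ and let $f\colon M^4\to\mathbb{Q}_c^{4+m}$ be an isometric immersion of an oriented Riemannian four-manifold. Suppose that at a point $x$ there is an oriented orthonormal frame $\{e_1,\dots,e_4\}$ of $T_xM$ such that, with $\alpha_{ij}=\alpha_f(e_i,e_j)$, $\alpha_{11}=\alpha_{22}$, $\alpha_{33}=\alpha_{44}$, $\alpha_{12}=\alpha_{34}=0$, $\|\alpha_{23}\|=\|\alpha_{14}\|$, $\|\alpha_{24}\|=\|\alpha_{13}\|$, $\langle\alpha_{14}+\alpha_{23},\alpha_{13}-\alpha_{24}\rangle=0$, $\langle\alpha_{13}+\alpha_{24},\alpha_{14}-\alpha_{23}\rangle=0$, and $\|\alpha_{13}\|^2+\|\alpha_{14}\|^2=c+\langle\alpha_{11},\alpha_{44}\rangle$. Let $e_{ij}=e_i\wedge e_j$, $\eta_1=\frac1{\sqrt2}(e_{12}+e_{34})$, $\eta_2=\frac1{\sqrt2}(e_{13}-e_{24})$, $\eta_3=\frac1{\sqrt2}(e_{14}+e_{23})$ (a basis of $\Lambda^2_+T_xM$) and $\eta_{i+3}=\ast\eta_i$-type anti-self-dual partners $\eta_4=\frac1{\sqrt2}(e_{12}-e_{34})$, $\eta_5=\frac1{\sqrt2}(e_{13}+e_{24})$, $\eta_6=\frac1{\sqrt2}(e_{14}-e_{23})$ (a basis of $\Lambda^2_-T_xM$). Then at $x$: (i) With respect to $\{\eta_1,\eta_2,\eta_3\}$ and $\{\eta_4,\eta_5,\eta_6\}$, the operators $\mathcal B^{[2]}_\pm$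 have matrices $$\begin{bmatrix}\mu^\pm_1&a^\pm_1&a^\pm_2\\ a^\pm_1&\mu^\pm_2&0\\ a^\pm_2&0&\mu^\pm_3\end{bmatrix},$$ where $\mu^\pm_1=\|\alpha_{14}\pm\alpha_{23}\|^2+\|\alpha_{13}\mp\alpha_{24}\|^2$, $\mu^\pm_2=\|\alpha_{11}-\alpha_{44}\|^2+4\|\alpha_{13}\|^2+2(\|\alpha_{14}\|\|\alpha_{23}\|\mp\langle\alpha_{14},\alpha_{23}\rangle)$, $\mu^\pm_3=\|\alpha_{11}-\alpha_{44}\|^2+4\|\alpha_{14}\|^2+2(\|\alpha_{13}\|\|\alpha_{24}\|\pm\langle\alpha_{13},\alpha_{24}\rangle)$, $a^\pm_1=\langle\alpha_{23}\pm\alpha_{14},\alpha_{44}-\alpha_{11}\rangle$, $a^\pm_2=\langle\alpha_{24}\mp\alpha_{13},\alpha_{44}-\alpha_{11}\rangle$. (ii) If $\ker\mathcal B^{[2]}_+\ne0$ at $x$, then one of: (ii1) $\alpha_{14}+\alpha_{23}=0=\alpha_{13}-\alpha_{24}$ and $a^+_1=a^+_2=0$; (ii2) $\alpha_{13}=\alpha_{24}=0$, $\alpha_{23}=\alpha_{14}\ne0$ and $\alpha_{44}-\alpha_{11}=2\rho\,\alpha_{14}$ for some $\rho\in\mathbb{R}$; (ii3) $\alpha_{14}=\alpha_{23}=0$, $\alpha_{24}=-\alpha_{13}\ne0$ and $\alpha_{44}-\alpha_{11}=2\rho\,\alpha_{13}$ for some $\rho\in\mathbb{R}$. (iii) If $\ker\mathcal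 B^{[2]}_-\ne0$ at $x$, then one of: (iii1) $\alpha_{14}-\alpha_{23}=0=\alpha_{13}+\alpha_{24}$ and $a^-_1=a^-_2=0$; (iii2) $\alpha_{13}=\alpha_{24}=0$, $\alpha_{23}=-\alpha_{14}\ne0$ and $\alpha_{44}-\alpha_{11}=2\rho\,\alpha_{14}$ for some $\rho\in\mathbb{R}$; (iii3) $\alpha_{14}=\alpha_{23}=0$, $\alpha_{24}=\alpha_{13}\ne0$ and $\alpha_{44}-\alpha_{11}=2\rho\,\alpha_{13}$ for some $\rho\in\mathbb{R}$. Moreover, in cases (ii2), (ii3), (iii2), (iii3), the normal curvature tensor of $f$ vanishes at $x$ and the first normal space $N_1f(x)=\operatorname{span}\{\alpha_f(X,Y):X,Y\in T_xM\}$ satisfies $1\le\dim N_1f(x)\le2$.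
   Context: $\mathbb{Q}_c^{N}$ is $\mathbb{R}^N$ ($c=0$) or the unit sphere ($c=1$); $\alpha_f$ is the second fundamental form. $\Lambda^2T_xM$ carries the inner product $\langle\langle v_1\wedge v_2,w_1\wedge w_2\rangle\rangle=\det(\langle v_i,w_j\rangle)$; $\ast$ is the Hodge star and $\Lambda^2_\pm T_xM$ its $\pm1$ eigenspaces. The Bochner–Weitzenböck operator $\mathcal B^{[2]}$ is the endomorphism of $\Lambda^2T_xM$ with $\langle\langle\mathcal B^{[2]}(v_1\wedge v_2),w_1\wedge w_2\rangle\rangle=\mathrm{Ric}(v_1,w_1)\langle v_2,w_2\rangle+\mathrm{Ric}(v_2,w_2)\langle v_1,w_1\rangle-\mathrm{Ric}(v_1,w_2)\langle v_2,w_1\rangle-\mathrm{Ric}(v_2,w_1)\langle v_1,w_2\rangle-2\langle R(v_1,v_2)w_2,w_1\rangle$, with $R(X,Y)=[\nabla_X,\nabla_Y]-\nabla_{[X,Y]}$, $\mathrm{Ric}(X,Y)=\sum_i\langle R(X,E_i)E_i,Y\rangle$. $\Lambda^2_\pm T_xM$ are $\mathcal B^{[2]}$-invariant and $\mathcal B^{[2]}_\pm$ denote the restrictions. The normal curvature tensor is $R^\perp(X,Y)\xi=\alpha_f(X,A_\xi Y)-\alpha_f(A_\xi X,Y)$, where $\langle A_\xi X,Y\rangle=\langle\alpha_f(X,Y),\xi\rangle$. *)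

(* Pointwise (linear-algebraic) model of Lemma 3.3:
   T_xM = R^4 with the oriented orthonormal frame e_1..e_4 = standard basis
   (indices 0..3 in Rocq), the normal space N_xM = R^m ('rV[R]_m),
   alpha_f given by the 16 vectors al i j = alpha_f(e_i,e_j). *)
From HB Require Import structures.
From mathcomp Require Import all_boot all_order all_algebra.
From mathcomp Require Import reals.
Set Implicit Arguments. Unset Strict Implicit. Unset Printing Implicit Defensive.
Import Order.TTheory GRing.Theory Num.Theory.
Local Open Scope ring_scope.

Section Defs.
Variable R : realType.
Variable m : nat.

Definition dot (u v : 'rV[R]_m) : R := \sum_(i < m) u 0 i * v 0 i.
Definition nrm (u : 'rV[R]_m) : R := Num.sqrt (dot u u).

Variable alpha : 'I_4 -> 'I_4 -> 'rV[R]_m.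
Variable c : R.

(* alpha on nat indices (0-based: al 0 0 = alpha_11 of the paper) *)
Definition al (i j : nat) : 'rV[R]_m := alpha (inord i) (inord j).
Definition kd (i j : nat) : R := (i == j)%:R.

(* <R(e_i,e_j)e_k, e_l>, Gauss equation for f : M -> Q_c^{4+m},
   with R(X,Y) = [nabla_X,nabla_Y] - nabla_[X,Y] *)
Definition Rc (i j k l : nat) : R :=
  c * (kd j k * kd i l - kd i k * kd j l)
  + dot (al j k) (al i l) - dot (al i k) (al j l).

Definition Ric (i j : nat) : R := \sum_(k < 4) Rc i k k j.

(* << B^[2](e_a ^ e_b), e_p ^ e_q >> *)
Definition Bb (a b p q : nat) : R :=
  Ric a p * kd b q + Ric b q * kd a p - Ric a q * kd b p - Ric b p * kd a q
  - 2 * Rc a b q p.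

(* Lambda^2 R^4 with orthonormal basis e_12,e_13,e_14,e_23,e_24,e_34,
   indexed 0..5; bivectors are coefficient columns 'cV_6. *)
Definition pfst (k : nat) : nat := nth 0%N [:: 0; 0; 0; 1; 1; 2]%N k.
Definition psnd (k : nat) : nat := nth 0%N [:: 1; 2; 3; 2; 3; 3]%N k.

(* matrix of B^[2] in the basis e_ij : column l = coefficients of B(e_l) *)
Definition Bmat : 'M[R]_6 :=
  \matrix_(k < 6, l < 6) Bb (pfst l) (psnd l) (pfst k) (psnd k).

(* normal curvature: R^perp(e_i,e_j) xi = alpha(e_i, A_xi e_j) - alpha(A_xi e_i, e_j),
   with A_xi e_j = sum_k <alpha(e_j,e_k), xi> e_k *)
Definition Rperp (i j : nat) (xi : 'rV[R]_m) : 'rV[R]_m :=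
  \sum_(k < 4) (dot (al j k) xi *: al i k - dot (al i k) xi *: al k j).

Definition normally_flat : Prop :=
  forall (i j : 'I_4) (xi : 'rV[R]_m), Rperp i j xi = 0.

(* first normal space N_1 = span{alpha(e_i,e_j)}; its dimension is the rank
   of the 16 x m matrix whose rows are the alpha(e_i,e_j) *)
Definition N1mx : 'M[R]_(16, m) :=
  \matrix_(k < 16, j < m) (al (k %/ 4) (k %% 4)) 0 j.
Definition dimN1 : nat := \rank N1mx.

End Defs.

Definition mkbv (R : nzRingType) (x12 x13 x14 x23 x24 x34 : R) : 'cV[R]_6 :=
  \col_(i < 6) nth 0 [:: x12; x13; x14; x23; x24; x34] i.

Definition bc (R : nzRingType) (w : 'cV[R]_6) (k : nat) : R := w (inord k) 0.

(* Hodge star for the orientation e_1 ^ e_2 ^ e_3 ^ e_4: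
   *e12 = e34, *e13 = -e24, *e14 = e23, *e23 = e14, *e24 = -e13, *e34 = e12 *)
Definition hodge (R : nzRingType) (w : 'cV[R]_6) : 'cV[R]_6 :=
  mkbv (bc w 5) (- bc w 4) (bc w 3) (bc w 2) (- bc w 1) (bc w 0).

Definition s2 (R : realType) : R := (Num.sqrt 2)^-1.
Definition eta1 (R : realType) : 'cV[R]_6 := mkbv (s2 R) 0 0 0 0 (s2 R).
Definition eta2 (R : realType) : 'cV[R]_6 := mkbv 0 (s2 R) 0 0 (- s2 R) 0.
Definition eta3 (R : realType) : 'cV[R]_6 := mkbv 0 0 (s2 R) (s2 R) 0 0.
Definition eta4 (R : realType) : 'cV[R]_6 := mkbv (s2 R) 0 0 0 0 (- s2 R).
Definition eta5 (R : realType) : 'cV[R]_6 := mkbv 0 (s2 R) 0 0 (s2 R) 0.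
Definition eta6 (R : realType) : 'cV[R]_6 := mkbv 0 0 (s2 R) (- s2 R) 0 0.

Definition mx3 (R : nzRingType) (B : 'M[R]_6) (v1 v2 v3 : 'cV[R]_6) : 'M[R]_3 :=
  \matrix_(k < 3, l < 3)
    ((nth v1 [:: v1; v2; v3] k)^T *m B *m (nth v1 [:: v1; v2; v3] l)) 0 0.

Definition symmx3 (R : nzRingType) (mu1 mu2 mu3 a1 a2 : R) : 'M[R]_3 :=
  \matrix_(k < 3, l < 3)
    nth 0 (nth [::] [:: [:: mu1; a1; a2]; [:: a1; mu2; 0]; [:: a2; 0; mu3]] k) l.

(* ker B_pm != 0 : some nonzero w in Lambda^2_pm (i.e. *w = pm w) with B w = 0 *)
Definition ker_plus_nz (R : nzRingType) (B : 'M[R]_6) : Prop :=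
  exists w : 'cV[R]_6, w != 0 /\ hodge w = w /\ B *m w = 0.
Definition ker_minus_nz (R : nzRingType) (B : 'M[R]_6) : Prop :=
  exists w : 'cV[R]_6, w != 0 /\ hodge w = - w /\ B *m w = 0.

(* By the Gauss equation, B^[2] is quadratic in the second fundamental form, and
   the hypotheses on alpha make its matrices in the bases eta the arrow matrices
   of (i).  A kernel vector t of such a matrix M gives t^T M t = 0, and t^T M t is
   a sum of four squares; their vanishing leaves only the listed configurations.
   In the cases (ii2)-(iii3), alpha = <,> A + b v for a symmetric bilinear form b
   and normal vectors A, v, so every shape operator is a combination of Id and b:
   they commute (normal flatness) and N_1 lies in span{A, v}. *)
From HB Require Import structures.
From mathcomp Require Import all_boot all_order all_algebra.
From mathcomp Require Import reals.
From mathcomp Require Import ring lra zify.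
Set Implicit Arguments.
Unset Strict Implicit.
Unset Printing Implicit Defensive.
Import Order.TTheory GRing.Theory Num.Theory.
Local Open Scope ring_scope.

Section InnerProduct.
Context {R : realType} {m : nat}.
Implicit Types (u v w : 'rV[R]_m) (a : R).

Lemma dotC u v : dot u v = dot v u.
Proof. by apply: eq_bigr => i _; rewrite mulrC. Qed.

Lemma dotDl u v w : dot (u + v) w = dot u w + dot v w.
Proof. by rewrite /dot -big_split; apply: eq_bigr => i _; rewrite !mxE mulrDl. Qed.

Lemma dotDr u v w : dot w (u + v) = dot w u + dot w v.
Proof. by rewrite dotC dotDl !(dotC _ w). Qed.

Lemma dotZl a u v : dot (a *: u) v = a * dot u v.
Proof. by rewrite /dot big_distrr; apply: eq_bigr => i _; rewrite !mxE -mulrA. Qed.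

Lemma dotZr a u v : dot v (a *: u) = a * dot v u.
Proof. by rewrite dotC dotZl dotC. Qed.

Lemma dotNl u v : dot (- u) v = - dot u v.
Proof. by rewrite -scaleN1r dotZl mulN1r. Qed.

Lemma dotNr u v : dot v (- u) = - dot v u.
Proof. by rewrite -scaleN1r dotZr mulN1r. Qed.

Lemma dot0l u : dot 0 u = 0.
Proof. by rewrite -(scale0r 0) dotZl mul0r. Qed.

Lemma dot0r u : dot u 0 = 0.
Proof. by rewrite dotC dot0l. Qed.

Lemma dot_ge0 u : 0 <= dot u u.
Proof. by apply: sumr_ge0 => i _; rewrite -expr2 sqr_ge0. Qed.

Lemma dot_eq0 u : (dot u u == 0) = (u == 0).
Proof.
apply/idP/eqP => [|->]; last by rewrite dot0l.
rewrite psumr_eq0 => [/allP u0|i _]; last by rewrite -expr2 sqr_ge0.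
apply/rowP => j; rewrite mxE.
by have /= := u0 j (mem_index_enum _); rewrite mulf_eq0 orbb => /eqP.
Qed.

Lemma nrm_sqr u : nrm u ^+ 2 = dot u u.
Proof. by rewrite /nrm sqr_sqrtr // dot_ge0. Qed.

Lemma nrm_eq0 u : (nrm u == 0) = (u == 0).
Proof. by rewrite /nrm sqrtr_eq0 le_eqVlt ltNge dot_ge0 orbF dot_eq0. Qed.

Lemma nrmN u : nrm (- u) = nrm u.
Proof. by rewrite /nrm dotNl dotNr opprK. Qed.

End InnerProduct.

Lemma mkbvZ (R : nzRingType) (s x12 x13 x14 x23 x24 x34 : R) :
  s *: mkbv x12 x13 x14 x23 x24 x34
  = mkbv (s * x12) (s * x13) (s * x14) (s * x23) (s * x24) (s * x34).
Proof. by apply/matrixP => i j; rewrite !mxE; case: i => [[|[|[|[|[|[|i]]]]]] ?]. Qed.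

Lemma mkbvE (R : nzRingType) (x0 x1 x2 x3 x4 x5 : R) k : (k < 6)%N ->
  mkbv x0 x1 x2 x3 x4 x5 (inord k) 0 = nth 0 [:: x0; x1; x2; x3; x4; x5] k.
Proof. by move=> hk; rewrite mxE inordK. Qed.

Section EtaBasis.
Variable R : realType.
Local Notation s := (s2 R).

Lemma eta1E : eta1 R = s *: mkbv 1 0 0 0 0 1.
Proof. by rewrite mkbvZ !(mulr0, mulr1). Qed.
Lemma eta2E : eta2 R = s *: mkbv 0 1 0 0 (-1) 0.
Proof. by rewrite mkbvZ !(mulr0, mulr1, mulrN1). Qed.
Lemma eta3E : eta3 R = s *: mkbv 0 0 1 1 0 0.
Proof. by rewrite mkbvZ !(mulr0, mulr1). Qed.
Lemma eta4E : eta4 R = s *: mkbv 1 0 0 0 0 (-1).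
Proof. by rewrite mkbvZ !(mulr0, mulr1, mulrN1). Qed.
Lemma eta5E : eta5 R = s *: mkbv 0 1 0 0 1 0.
Proof. by rewrite mkbvZ !(mulr0, mulr1). Qed.
Lemma eta6E : eta6 R = s *: mkbv 0 0 1 (-1) 0 0.
Proof. by rewrite mkbvZ !(mulr0, mulr1, mulrN1). Qed.

Lemma sqrt2_neq0 : Num.sqrt 2 != 0 :> R.
Proof. by rewrite sqrtr_eq0 -ltNge ltr0n. Qed.

Lemma sqrt2_s2 : Num.sqrt 2 * s = 1.
Proof. by rewrite mulfV // sqrt2_neq0. Qed.

Lemma s2_sqr : s * s = 2^-1.
Proof. by rewrite /s2 -invfM -expr2 sqr_sqrtr. Qed.

End EtaBasis.

Lemma bilin_scale (R : comNzRingType) n (s : R) (B : 'M[R]_n) (u v : 'cV[R]_n) :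
  ((s *: u)^T *m B *m (s *: v)) 0 0 = s * s * (u^T *m B *m v) 0 0.
Proof. by rewrite [(s *: u)^T]linearZ -!scalemxAl -scalemxAr scalerA mxE. Qed.

Lemma bilin_sum6 (R : comNzRingType) (B : 'M[R]_6) (u v : 'cV[R]_6) :
  (u^T *m B *m v) 0 0 = \sum_(a < 6) \sum_(b < 6) u a 0 * B a b * v b 0.
Proof.
rewrite mxE; under eq_bigr => j _ do rewrite mxE big_distrl.
by rewrite exchange_big; apply: eq_bigr => i _; apply: eq_bigr => j _; rewrite !mxE.
Qed.

Lemma sum6 (R : nmodType) (F : 'I_6 -> R) : \sum_(i < 6) F i =
  F (inord 0) + F (inord 1) + F (inord 2) + F (inord 3) + F (inord 4) + F (inord 5).
Proof.
rewrite !big_ord_recr big_ord0 /= add0r.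
by congr (_+_+_+_+_+_); congr F; apply/val_inj; rewrite /= inordK.
Qed.

(* The shape of [al alpha] forced by the hypotheses, in the paper's notation:
   A = alpha_11 = alpha_22, P = alpha_33 = alpha_44, alpha_12 = alpha_34 = 0,
   x = alpha_13, y = alpha_14, z = alpha_23, w = alpha_24. *)
Definition nform {V : nmodType} (A P x y z w : V) (i j : nat) : V :=
  match i, j with
  | 0, 0 | 1, 1 => A | 2, 2 | 3, 3 => P
  | 0, 2 | 2, 0 => x | 0, 3 | 3, 0 => y
  | 1, 2 | 2, 1 => z | 1, 3 | 3, 1 => w
  | _, _ => 0%R
  end.

Lemma RicE (R : realType) m (alpha : 'I_4 -> 'I_4 -> 'rV[R]_m) (c : R) i j :
  Ric alpha c i j
  = Rc alpha c i 0 0 j + Rc alpha c i 1 1 j + Rc alpha c i 2 2 j + Rc alpha c i 3 3 j.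
Proof. by rewrite /Ric !big_ord_recr big_ord0 /= add0r. Qed.

Section BochnerOperator.
Variables (R : realType) (m : nat) (c : R) (alpha : 'I_4 -> 'I_4 -> 'rV[R]_m).
Variables A P x y z w : 'rV[R]_m.
Hypothesis alE : forall i j, (i < 4)%N -> (j < 4)%N ->
  al alpha i j = nform A P x y z w i j.
Hypotheses (nrm_zy : nrm z = nrm y) (nrm_wx : nrm w = nrm x).
Hypotheses (dot_yw : dot y w = dot x z) (dot_zw : dot z w = dot x y).
Hypothesis gauss : c = dot x x + dot y y - dot A P.

Let dot_zz : dot z z = dot y y. Proof. by rewrite -!nrm_sqr nrm_zy. Qed.
Let dot_ww : dot w w = dot x x. Proof. by rewrite -!nrm_sqr nrm_wx. Qed.

Ltac bochner_entry :=
  rewrite ?eta1E ?eta2E ?eta3E ?eta4E ?eta5E ?eta6E bilin_scale s2_sqr;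
  rewrite bilin_sum6 !sum6 !mkbvE //=;
  rewrite !(mul0r, mulr0, add0r, addr0, mul1r, mulr1, mulN1r, mulrN1);
  rewrite !mxE !inordK // /Bb !RicE /Rc /kd /=;
  rewrite !alE //= ?nrm_zy ?nrm_wx -?expr2 ?nrm_sqr;
  rewrite ?(dotDl, dotDr, dotNl, dotNr, dot0l, dot0r);
  (* orient every inner product along A, P, x, y, z, w so that [field] sees
     syntactically equal monomials *)
  rewrite ?(dotC x A) ?(dotC y A) ?(dotC z A) ?(dotC w A) ?(dotC P A)
          ?(dotC y x) ?(dotC z x) ?(dotC w x) ?(dotC P x) ?(dotC z y)
          ?(dotC w y) ?(dotC P y) ?(dotC w z) ?(dotC P z) ?(dotC P w);
  rewrite ?gauss ?dot_zz ?dot_ww ?dot_yw ?dot_zw; field; by [].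

Lemma mx3_Bmat_selfdual :
  mx3 (Bmat alpha c) (eta1 R) (eta2 R) (eta3 R)
  = symmx3
      (nrm (y + z) ^+ 2 + nrm (x - w) ^+ 2)
      (nrm (A - P) ^+ 2 + 4 * nrm x ^+ 2 + 2 * (nrm y * nrm z - dot y z))
      (nrm (A - P) ^+ 2 + 4 * nrm y ^+ 2 + 2 * (nrm x * nrm w + dot x w))
      (dot (z + y) (P - A)) (dot (w - x) (P - A)).
Proof.
apply/matrixP => k l; rewrite [LHS]mxE [RHS]mxE.
by case: k => [[|[|[|k]]] ?] //; case: l => [[|[|[|l]]] ?] //=; bochner_entry.
Qed.

Lemma mx3_Bmat_antiselfdual :
  mx3 (Bmat alpha c) (eta4 R) (eta5 R) (eta6 R)
  = symmx3
      (nrm (y - z) ^+ 2 + nrm (x + w) ^+ 2)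
      (nrm (A - P) ^+ 2 + 4 * nrm x ^+ 2 + 2 * (nrm y * nrm z + dot y z))
      (nrm (A - P) ^+ 2 + 4 * nrm y ^+ 2 + 2 * (nrm x * nrm w - dot x w))
      (dot (z - y) (P - A)) (dot (w + x) (P - A)).
Proof.
apply/matrixP => k l; rewrite [LHS]mxE [RHS]mxE.
by case: k => [[|[|[|k]]] ?] //; case: l => [[|[|[|l]]] ?] //=; bochner_entry.
Qed.

End BochnerOperator.

Lemma symmx3_kernel (R : comNzRingType) (B : 'M[R]_6) (v1 v2 v3 : 'cV[R]_6)
    (mu1 mu2 mu3 a1 a2 t1 t2 t3 : R) :
  mx3 B v1 v2 v3 = symmx3 mu1 mu2 mu3 a1 a2 ->
  B *m (t1 *: v1 + t2 *: v2 + t3 *: v3) = 0 ->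
  [/\ mu1 * t1 + a1 * t2 + a2 * t3 = 0, a1 * t1 + mu2 * t2 = 0
    & a2 * t1 + mu3 * t3 = 0].
Proof.
move=> HM Bv; pose v k := nth v1 [:: v1; v2; v3] k.
pose S k l := nth 0 (nth [::] [:: [:: mu1; a1; a2]; [:: a1; mu2; 0]; [:: a2; 0; mu3]] k) l.
have entry k l : (k < 3)%N -> (l < 3)%N -> ((v k)^T *m B *m v l) 0 0 = S k l.
  move=> hk hl; have := congr1 (fun M : 'M[R]_3 => M (inord k) (inord l)) HM.
  by rewrite !mxE !inordK.
have row k : (k < 3)%N -> t1 * S k 0%N + t2 * S k 1%N + t3 * S k 2%N = 0.
  have addE (M N : 'M[R]_1) : (M + N) 0 0 = M 0 0 + N 0 0 by rewrite mxE.
  have scaleE a (M : 'M[R]_1) : (a *: M) 0 0 = a * M 0 0 by rewrite mxE.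
  move=> hk; rewrite -!entry // -!scaleE -!addE !scalemxAr -!mulmxDr.
  by rewrite -mulmxA Bv mulmx0 mxE.
have := row 0%N isT; have := row 1%N isT; have := row 2%N isT.
by rewrite /S /= => e3 e2 e1; split; [rewrite -e1 | rewrite -e2 | rewrite -e3]; ring.
Qed.

Lemma hodge_coord (R : nzRingType) (w : 'cV[R]_6) (k : nat) : (k < 6)%N ->
  bc (hodge w) k = nth 0 [:: bc w 5; - bc w 4; bc w 3; bc w 2; - bc w 1; bc w 0] k.
Proof. by move=> hk; rewrite /bc mkbvE. Qed.

Lemma selfdualE (R : realType) (w : 'cV[R]_6) : hodge w = w ->
  w = Num.sqrt 2 *: (bc w 0 *: eta1 R + bc w 1 *: eta2 R + bc w 2 *: eta3 R).
Proof.
move=> hw.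
have c3 : bc w 3 = bc w 2 by rewrite -[in LHS]hw hodge_coord.
have c4 : bc w 4 = - bc w 1 by rewrite -[in LHS]hw hodge_coord.
have c5 : bc w 5 = bc w 0 by rewrite -[in LHS]hw hodge_coord.
apply/matrixP => i j; rewrite (ord1 j) -(inord_val i) !mxE inordK ?ltn_ord //.
case: i => [[|[|[|[|[|[|i]]]]]] ?] //=; rewrite -[w (inord _) 0]/(bc w _) ?c3 ?c4 ?c5;
  by rewrite -[LHS]mul1r -{1}(sqrt2_s2 R); ring.
Qed.

Lemma antiselfdualE (R : realType) (w : 'cV[R]_6) : hodge w = - w ->
  w = Num.sqrt 2 *: (bc w 0 *: eta4 R + bc w 1 *: eta5 R + bc w 2 *: eta6 R).
Proof.
move=> hw; have hw' : w = - hodge w by rewrite hw opprK.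
have c3 : bc w 3 = - bc w 2 by rewrite [in LHS]hw' /bc mxE -/(bc _ 3) hodge_coord.
have c4 : bc w 4 = bc w 1 by rewrite [in LHS]hw' /bc mxE -/(bc _ 4) hodge_coord //= opprK.
have c5 : bc w 5 = - bc w 0 by rewrite [in LHS]hw' /bc mxE -/(bc _ 5) hodge_coord.
apply/matrixP => i j; rewrite (ord1 j) -(inord_val i) !mxE inordK ?ltn_ord //.
case: i => [[|[|[|[|[|[|i]]]]]] ?] //=; rewrite -[w (inord _) 0]/(bc w _) ?c3 ?c4 ?c5;
  by rewrite -[LHS]mul1r -{1}(sqrt2_s2 R); ring.
Qed.

Lemma kernel_coords (R : fieldType) (B : 'M[R]_6) (w v1 v2 v3 : 'cV[R]_6)
    (s t1 t2 t3 : R) :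
  s != 0 -> w = s *: (t1 *: v1 + t2 *: v2 + t3 *: v3) -> w != 0 -> B *m w = 0 ->
  [|| t1 != 0, t2 != 0 | t3 != 0] /\ B *m (t1 *: v1 + t2 *: v2 + t3 *: v3) = 0.
Proof.
move=> s0 wE w0 Bw; split.
  apply: contraNT w0; rewrite wE !negb_or !negbK => /and3P[/eqP-> /eqP-> /eqP->].
  by rewrite !scale0r !addr0 scaler0.
by move: Bw; rewrite wE -scalemxAr => /eqP; rewrite scaler_eq0 (negbTE s0) => /eqP.
Qed.

Section KernelEquations.
Variables (R : realType) (B : 'M[R]_6) (mu1 mu2 mu3 a1 a2 : R).

Let kernel_equations (t1 t2 t3 : R) :=
  [/\ [|| t1 != 0, t2 != 0 | t3 != 0], mu1 * t1 + a1 * t2 + a2 * t3 = 0,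
      a1 * t1 + mu2 * t2 = 0 & a2 * t1 + mu3 * t3 = 0].

Lemma ker_plus_equations :
  mx3 B (eta1 R) (eta2 R) (eta3 R) = symmx3 mu1 mu2 mu3 a1 a2 -> ker_plus_nz B ->
  exists t1 t2 t3, kernel_equations t1 t2 t3.
Proof.
move=> HM [w [w0 [/selfdualE wE Bw]]].
have [nz Bv] := kernel_coords (sqrt2_neq0 R) wE w0 Bw.
by have [e1 e2 e3] := symmx3_kernel HM Bv; do 3!eexists; split; eassumption.
Qed.

Lemma ker_minus_equations :
  mx3 B (eta4 R) (eta5 R) (eta6 R) = symmx3 mu1 mu2 mu3 a1 a2 -> ker_minus_nz B ->
  exists t1 t2 t3, kernel_equations t1 t2 t3.
Proof.
move=> HM [w [w0 [/antiselfdualE wE Bw]]].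
have [nz Bv] := kernel_coords (sqrt2_neq0 R) wE w0 Bw.
by have [e1 e2 e3] := symmx3_kernel HM Bv; do 3!eexists; split; eassumption.
Qed.

End KernelEquations.

Lemma scaler_cancel (R : fieldType) (V : lmodType R) (s t : R) (u v : V) :
  t != 0 -> t *: v = s *: u -> v = (s / t) *: u.
Proof. by move=> t0 e; rewrite -[v](scalerK t0) e scalerA mulrC. Qed.

Lemma scaler_double (R : pzRingType) (V : lmodType R) (a : R) (v : V) :
  a *: (v + v) = (2 * a) *: v.
Proof. by rewrite -scalerA scaler_nat mulr2n scalerDr. Qed.

Section SelfdualKernel.
Variables (R : realType) (m : nat) (x y z w D : 'rV[R]_m) (t1 t2 t3 : R).
Hypotheses (nrm_zy : nrm z = nrm y) (nrm_wx : nrm w = nrm x).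
Hypothesis e1 : (nrm (y + z) ^+ 2 + nrm (x - w) ^+ 2) * t1
  + dot (z + y) D * t2 + dot (w - x) D * t3 = 0.
Hypothesis e2 : dot (z + y) D * t1
  + (nrm D ^+ 2 + 4 * nrm x ^+ 2 + 2 * (nrm y * nrm z - dot y z)) * t2 = 0.
Hypothesis e3 : dot (w - x) D * t1
  + (nrm D ^+ 2 + 4 * nrm y ^+ 2 + 2 * (nrm x * nrm w + dot x w)) * t3 = 0.

(* The left-hand side is [t1 * e1 + t2 * e2 + t3 * e3], i.e. t^T M t for the arrow
   matrix M. *)
Lemma kernel_sum_of_squares :
  dot (t1 *: (y + z) + t2 *: D) (t1 *: (y + z) + t2 *: D)
  + dot (t1 *: (x - w) - t3 *: D) (t1 *: (x - w) - t3 *: D)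
  + (4 * dot x x + dot (y - z) (y - z)) * t2 ^+ 2
  + (4 * dot y y + dot (x + w) (x + w)) * t3 ^+ 2 = 0.
Proof.
rewrite -[RHS](_ : t1 * 0 + t2 * 0 + t3 * 0 = 0); last by ring.
rewrite -[X in t1 * X]e1 -[X in t2 * X]e2 -[X in t3 * X]e3.
rewrite nrm_zy nrm_wx -!expr2 !nrm_sqr.
have dot_zz : dot z z = dot y y by rewrite -!nrm_sqr nrm_zy.
have dot_ww : dot w w = dot x x by rewrite -!nrm_sqr nrm_wx.
rewrite !(dotDl, dotDr, dotNl, dotNr, dotZl, dotZr) dot_zz dot_ww.
rewrite (dotC z y) (dotC w x) (dotC D y) (dotC D z) (dotC D w) (dotC D x).
ring.
Qed.

Lemma kernel_vanishing :
  [/\ t1 *: (y + z) + t2 *: D = 0, t1 *: (x - w) - t3 *: D = 0,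
      t2 != 0 -> x = 0 /\ z = y & t3 != 0 -> y = 0 /\ w = - x].
Proof.
have := kernel_sum_of_squares.
have g1 := dot_ge0 (t1 *: (y + z) + t2 *: D).
have g2 := dot_ge0 (t1 *: (x - w) - t3 *: D).
have gx := dot_ge0 x; have gy := dot_ge0 y.
have gyz := dot_ge0 (y - z); have gxw := dot_ge0 (x + w).
have g3 : 0 <= (4 * dot x x + dot (y - z) (y - z)) * t2 ^+ 2.
  by rewrite mulr_ge0 ?sqr_ge0 //; lra.
have g4 : 0 <= (4 * dot y y + dot (x + w) (x + w)) * t3 ^+ 2.
  by rewrite mulr_ge0 ?sqr_ge0 //; lra.
move=> sos; split.
- by apply/eqP; rewrite -dot_eq0; apply/eqP; lra.
- by apply/eqP; rewrite -dot_eq0; apply/eqP; lra.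
- move=> t2n0; have /eqP : (4 * dot x x + dot (y - z) (y - z)) * t2 ^+ 2 = 0 by lra.
  rewrite mulf_eq0 sqrf_eq0 (negbTE t2n0) orbF => /eqP h.
  have /eqP : dot x x = 0 by lra.
  have /eqP : dot (y - z) (y - z) = 0 by lra.
  by rewrite !dot_eq0 subr_eq0 => /eqP-> /eqP->.
- move=> t3n0; have /eqP : (4 * dot y y + dot (x + w) (x + w)) * t3 ^+ 2 = 0 by lra.
  rewrite mulf_eq0 sqrf_eq0 (negbTE t3n0) orbF => /eqP h.
  have /eqP : dot y y = 0 by lra.
  have /eqP : dot (x + w) (x + w) = 0 by lra.
  by rewrite !dot_eq0 addr_eq0 => /eqP-> /eqP->; rewrite opprK.
Qed.

End SelfdualKernel.

Lemma selfdual_kernel_cases (R : realType) m (x y z w D : 'rV[R]_m) (t1 t2 t3 : R) :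
  nrm z = nrm y -> nrm w = nrm x -> [|| t1 != 0, t2 != 0 | t3 != 0] ->
  (nrm (y + z) ^+ 2 + nrm (x - w) ^+ 2) * t1
    + dot (z + y) D * t2 + dot (w - x) D * t3 = 0 ->
  dot (z + y) D * t1
    + (nrm D ^+ 2 + 4 * nrm x ^+ 2 + 2 * (nrm y * nrm z - dot y z)) * t2 = 0 ->
  dot (w - x) D * t1
    + (nrm D ^+ 2 + 4 * nrm y ^+ 2 + 2 * (nrm x * nrm w + dot x w)) * t3 = 0 ->
  (y + z = 0 /\ x - w = 0 /\ dot (z + y) D = 0 /\ dot (w - x) D = 0)
  \/ (x = 0 /\ w = 0 /\ z = y /\ y != 0 /\ exists rho : R, D = (2 * rho) *: y)
  \/ (y = 0 /\ z = 0 /\ w = - x /\ x != 0 /\ exists rho : R, D = (2 * rho) *: x).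
Proof.
move=> nrm_zy nrm_wx nz e1 e2 e3.
have [v1 v2 t2P t3P] := kernel_vanishing nrm_zy nrm_wx e1 e2 e3.
have [t20|t2n0] := eqVneq t2 0; last first.
  have [x0 zy] := t2P t2n0; subst x z.
  have w0 : w = 0 by apply/eqP; rewrite -nrm_eq0 nrm_wx nrm_eq0.
  subst w; have [->|y0] := eqVneq y 0; first by left; rewrite !(addr0, subr0, dot0l).
  right; left; do 4!split => //; exists (- (t1 / t2)).
  rewrite -scaler_double -mulNr; apply: scaler_cancel t2n0 _.
  by apply/eqP; rewrite scaleNr -addr_eq0 addrC v1.
have [t30|t3n0] := eqVneq t3 0; last first.
  have [y0 wx] := t3P t3n0; subst y w.
  have z0 : z = 0 by apply/eqP; rewrite -nrm_eq0 nrm_zy nrm_eq0.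
  subst z; have [->|x0] := eqVneq x 0; first by left; rewrite !(oppr0, addr0, subr0, dot0l).
  right; right; do 4!split => //; exists (t1 / t3).
  rewrite -scaler_double; apply: scaler_cancel t3n0 _.
  by apply/eqP; rewrite eq_sym -subr_eq0 -v2 opprK.
move: nz v1 v2; rewrite t20 t30 eqxx !orbF !scale0r addr0 subr0 => t1n0.
move=> /eqP; rewrite scaler_eq0 (negbTE t1n0) => /eqP yz.
move=> /eqP; rewrite scaler_eq0 (negbTE t1n0) => /eqP xw.
by left; rewrite yz xw (addrC z) yz -opprB xw oppr0 !dot0l.
Qed.

Lemma antiselfdual_kernel_cases (R : realType) m (x y z w D : 'rV[R]_m) (t1 t2 t3 : R) :
  nrm z = nrm y -> nrm w = nrm x -> [|| t1 != 0, t2 != 0 | t3 != 0] ->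
  (nrm (y - z) ^+ 2 + nrm (x + w) ^+ 2) * t1
    + dot (z - y) D * t2 + dot (w + x) D * t3 = 0 ->
  dot (z - y) D * t1
    + (nrm D ^+ 2 + 4 * nrm x ^+ 2 + 2 * (nrm y * nrm z + dot y z)) * t2 = 0 ->
  dot (w + x) D * t1
    + (nrm D ^+ 2 + 4 * nrm y ^+ 2 + 2 * (nrm x * nrm w - dot x w)) * t3 = 0 ->
  (y - z = 0 /\ x + w = 0 /\ dot (z - y) D = 0 /\ dot (w + x) D = 0)
  \/ (x = 0 /\ w = 0 /\ z = - y /\ y != 0 /\ exists rho : R, D = (2 * rho) *: y)
  \/ (y = 0 /\ z = 0 /\ w = x /\ x != 0 /\ exists rho : R, D = (2 * rho) *: x).
Proof.
(* The substitution (z, w, t1) -> (-z, -w, -t1) turns this into the self-dual case. *)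
move=> nrm_zy nrm_wx nz e1 e2 e3.
have nz' : [|| - t1 != 0, t2 != 0 | t3 != 0] by rewrite oppr_eq0.
have e1' : (nrm (y + - z) ^+ 2 + nrm (x - - w) ^+ 2) * - t1
    + dot (- z + y) D * t2 + dot (- w - x) D * t3 = 0.
  by rewrite opprK -oppr0 -e1 !(dotDl, dotNl); ring.
have e2' : dot (- z + y) D * - t1
    + (nrm D ^+ 2 + 4 * nrm x ^+ 2 + 2 * (nrm y * nrm (- z) - dot y (- z))) * t2 = 0.
  by rewrite -e2 nrmN !(dotDl, dotNl, dotNr); ring.
have e3' : dot (- w - x) D * - t1
    + (nrm D ^+ 2 + 4 * nrm y ^+ 2 + 2 * (nrm x * nrm (- w) + dot x (- w))) * t3 = 0.
  by rewrite -e3 nrmN !(dotDl, dotNl, dotNr); ring.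
have nrm_zy' : nrm (- z) = nrm y by rewrite nrmN.
have nrm_wx' : nrm (- w) = nrm x by rewrite nrmN.
case: (selfdual_kernel_cases nrm_zy' nrm_wx' nz' e1' e2' e3')
  => [[yz [xw [d1 d2]]]|[[x0 [w0 [zy [y0 hD]]]]|[y0 [z0 [wx [x0 hD]]]]]].
- left; rewrite opprK in xw; do 2!split => //.
  by move: d1 d2; rewrite !(dotDl, dotNl) => d1 d2; split; lra.
- by right; left; move/eqP: w0; rewrite oppr_eq0 => /eqP w0; subst y; rewrite opprK.
- by right; right; move/eqP: z0; rewrite oppr_eq0 (oppr_inj wx) => /eqP.
Qed.

Section FirstNormalSpace.
Variables (R : realType) (m : nat) (alpha : 'I_4 -> 'I_4 -> 'rV[R]_m).

Lemma dimN1_gt0 i j :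
  (i < 4)%N -> (j < 4)%N -> al alpha i j != 0 -> (0 < dimN1 alpha)%N.
Proof.
move=> hi hj; apply: contraNT; rewrite -eqn0Ngt mxrank_eq0 => /eqP N0.
have hk : (4 * i + j < 16)%N by lia.
apply/eqP/rowP => l; have := congr1 (fun M : 'M[R]_(16, m) => M (Ordinal hk) l) N0.
by rewrite !mxE /= mulnC divnMDl // modnMDl divn_small // modn_small // addn0.
Qed.

Lemma dimN1_le2 (A v : 'rV[R]_m) (a b : nat -> nat -> R) :
  (forall i j, (i < 4)%N -> (j < 4)%N -> al alpha i j = a i j *: A + b i j *: v) ->
  (dimN1 alpha <= 2)%N.
Proof.
move=> alE; rewrite /dimN1.
have -> : N1mx alpha
    = \matrix_(k < 16, t < 2) [:: a (k %/ 4)%N (k %% 4)%N; b (k %/ 4)%N (k %% 4)%N]`_t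
      *m \matrix_(t < 2, l < m) [:: A 0 l; v 0 l]`_t.
  apply/matrixP => k l; rewrite !mxE !big_ord_recr big_ord0 /= !mxE add0r.
  by rewrite alE; [rewrite !mxE | rewrite ltn_divLR | rewrite ltn_mod].
by apply: leq_trans (mxrankM_maxr _ _) _; apply: rank_leq_row.
Qed.

End FirstNormalSpace.

Lemma pencil_normally_flat (R : realType) m (alpha : 'I_4 -> 'I_4 -> 'rV[R]_m)
    (A v : 'rV[R]_m) (b11 b33 b13 b14 b23 b24 : R) :
  (forall i j, (i < 4)%N -> (j < 4)%N ->
     al alpha i j = kd R i j *: A + nform b11 b33 b13 b14 b23 b24 i j *: v) ->
  normally_flat alpha.
Proof.
move=> alE i j xi; rewrite /Rperp !big_ord_recr big_ord0 /= add0r.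
case: i => [[|[|[|[|i]]]] ?] //; case: j => [[|[|[|[|j]]]] ?] //=;
  rewrite !alE // /kd /= !(dotDl, dotZl); apply/rowP => l; rewrite !mxE; ring.
Qed.

Lemma nform_pencil (R : realType) m (A v : 'rV[R]_m) (p ex ey ez ew : R) i j :
  (i < 4)%N -> (j < 4)%N ->
  nform A (A + p *: v) (ex *: v) (ey *: v) (ez *: v) (ew *: v) i j
  = kd R i j *: A + nform 0 p ex ey ez ew i j *: v.
Proof.
case: i => [|[|[|[|i]]]] // _; case: j => [|[|[|[|j]]]] // _;
  by rewrite /kd /= ?scale0r ?scale1r ?add0r ?addr0.
Qed.

Lemma line_normally_flat_dimN1 (R : realType) m (alpha : 'I_4 -> 'I_4 -> 'rV[R]_m)
    (A v : 'rV[R]_m) (p ex ey ez ew : R) :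
  (forall i j, (i < 4)%N -> (j < 4)%N ->
     al alpha i j = nform A (A + p *: v) (ex *: v) (ey *: v) (ez *: v) (ew *: v) i j) ->
  v != 0 -> (ex != 0) || (ey != 0) ->
  normally_flat alpha /\ (1 <= dimN1 alpha <= 2)%N.
Proof.
move=> alE v0 exy.
have alE' i j : (i < 4)%N -> (j < 4)%N ->
    al alpha i j = kd R i j *: A + nform 0 p ex ey ez ew i j *: v.
  by move=> hi hj; rewrite alE ?nform_pencil.
split; first exact: pencil_normally_flat alE'.
rewrite (dimN1_le2 alE') andbT.
case/orP: exy => [ex0|ey0];
  [apply: (@dimN1_gt0 _ _ _ 0 2) | apply: (@dimN1_gt0 _ _ _ 0 3)] => //;
  by rewrite alE //= scaler_eq0 negb_or ?ex0 ?ey0.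
Qed.

Lemma line_cases_normally_flat_dimN1 (R : realType) m
    (alpha : 'I_4 -> 'I_4 -> 'rV[R]_m) (A P x y z w : 'rV[R]_m) :
  (forall i j, (i < 4)%N -> (j < 4)%N -> al alpha i j = nform A P x y z w i j) ->
  (x = 0 /\ w = 0 /\ z = y /\ y != 0 /\ exists rho : R, P - A = (2 * rho) *: y)
  \/ (y = 0 /\ z = 0 /\ w = - x /\ x != 0 /\ exists rho : R, P - A = (2 * rho) *: x)
  \/ (x = 0 /\ w = 0 /\ z = - y /\ y != 0 /\ exists rho : R, P - A = (2 * rho) *: y)
  \/ (y = 0 /\ z = 0 /\ w = x /\ x != 0 /\ exists rho : R, P - A = (2 * rho) *: x) ->
  normally_flat alpha /\ (1 <= dimN1 alpha <= 2)%N.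
Proof.
move=> alE; have PE rho v : P - A = (2 * rho) *: v -> P = A + (2 * rho) *: v.
  by move=> <-; rewrite addrC subrK.
case=> [[x0 [w0 [zy [y0 [rho /PE PA]]]]] | [[y0 [z0 [wx [x0 [rho /PE PA]]]]] |
        [[x0 [w0 [zy [y0 [rho /PE PA]]]]] | [y0 [z0 [wx [x0 [rho /PE PA]]]]]]]].
- apply: (line_normally_flat_dimN1 (ex := 0) (ey := 1) (ez := 1) (ew := 0) _ y0).
    by move=> i j hi hj; rewrite alE // PA x0 w0 zy scale0r scale1r.
  by rewrite oner_neq0 orbT.
- apply: (line_normally_flat_dimN1 (ex := 1) (ey := 0) (ez := 0) (ew := -1) _ x0).
    by move=> i j hi hj; rewrite alE // PA y0 z0 wx scale0r scale1r scaleN1r.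
  by rewrite oner_neq0.
- apply: (line_normally_flat_dimN1 (ex := 0) (ey := 1) (ez := -1) (ew := 0) _ y0).
    by move=> i j hi hj; rewrite alE // PA x0 w0 zy scale0r scale1r scaleN1r.
  by rewrite oner_neq0 orbT.
- apply: (line_normally_flat_dimN1 (ex := 1) (ey := 0) (ez := 0) (ew := 1) _ x0).
    by move=> i j hi hj; rewrite alE // PA y0 z0 wx scale0r scale1r.
  by rewrite oner_neq0.
Qed.

Lemma cross_dot_relations (R : realType) m (x y z w : 'rV[R]_m) :
  dot (y + z) (x - w) = 0 -> dot (x + w) (y - z) = 0 ->
  dot y w = dot x z /\ dot z w = dot x y.
Proof.
rewrite !(dotDl, dotDr, dotNr) (dotC z x) (dotC w y) (dotC w z) (dotC y x).
by move=> h7 h8; split; lra.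
Qed.

Theorem lemma3p3 (R : realType) (m : nat) (c : R)
  (alpha : 'I_4 -> 'I_4 -> 'rV[R]_m)
  (hc : c = 0 \/ c = 1)
  (hsym : forall i j : 'I_4, alpha i j = alpha j i)
  (h1 : al alpha 0 0 = al alpha 1 1)
  (h2 : al alpha 2 2 = al alpha 3 3)
  (h3 : al alpha 0 1 = 0)
  (h4 : al alpha 2 3 = 0)
  (h5 : nrm (al alpha 1 2) = nrm (al alpha 0 3))
  (h6 : nrm (al alpha 1 3) = nrm (al alpha 0 2))
  (h7 : dot (al alpha 0 3 + al alpha 1 2) (al alpha 0 2 - al alpha 1 3) = 0)
  (h8 : dot (al alpha 0 2 + al alpha 1 3) (al alpha 0 3 - al alpha 1 2) = 0)
  (h9 : nrm (al alpha 0 2) ^+ 2 + nrm (al alpha 0 3) ^+ 2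
        = c + dot (al alpha 0 0) (al alpha 3 3)) :
  let a := al alpha in
  let D := a 3%N 3%N - a 0%N 0%N in
  let B := Bmat alpha c in
  (* (i) *)
  (mx3 B (eta1 R) (eta2 R) (eta3 R)
   = symmx3
       (nrm (a 0%N 3%N + a 1%N 2%N) ^+ 2 + nrm (a 0%N 2%N - a 1%N 3%N) ^+ 2)
       (nrm (a 0%N 0%N - a 3%N 3%N) ^+ 2 + 4 * nrm (a 0%N 2%N) ^+ 2
          + 2 * (nrm (a 0%N 3%N) * nrm (a 1%N 2%N) - dot (a 0%N 3%N) (a 1%N 2%N)))
       (nrm (a 0%N 0%N - a 3%N 3%N) ^+ 2 + 4 * nrm (a 0%N 3%N) ^+ 2
          + 2 * (nrm (a 0%N 2%N) * nrm (a 1%N 3%N) + dot (a 0%N 2%N) (a 1%N 3%N)))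
       (dot (a 1%N 2%N + a 0%N 3%N) D)
       (dot (a 1%N 3%N - a 0%N 2%N) D)
  /\ mx3 B (eta4 R) (eta5 R) (eta6 R)
   = symmx3
       (nrm (a 0%N 3%N - a 1%N 2%N) ^+ 2 + nrm (a 0%N 2%N + a 1%N 3%N) ^+ 2)
       (nrm (a 0%N 0%N - a 3%N 3%N) ^+ 2 + 4 * nrm (a 0%N 2%N) ^+ 2
          + 2 * (nrm (a 0%N 3%N) * nrm (a 1%N 2%N) + dot (a 0%N 3%N) (a 1%N 2%N)))
       (nrm (a 0%N 0%N - a 3%N 3%N) ^+ 2 + 4 * nrm (a 0%N 3%N) ^+ 2
          + 2 * (nrm (a 0%N 2%N) * nrm (a 1%N 3%N) - dot (a 0%N 2%N) (a 1%N 3%N)))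
       (dot (a 1%N 2%N - a 0%N 3%N) D)
       (dot (a 1%N 3%N + a 0%N 2%N) D))
  (* (ii) *)
  /\ (ker_plus_nz B ->
       (a 0%N 3%N + a 1%N 2%N = 0 /\ a 0%N 2%N - a 1%N 3%N = 0
          /\ dot (a 1%N 2%N + a 0%N 3%N) D = 0 /\ dot (a 1%N 3%N - a 0%N 2%N) D = 0)
    \/ (a 0%N 2%N = 0 /\ a 1%N 3%N = 0 /\ a 1%N 2%N = a 0%N 3%N /\ a 0%N 3%N != 0
          /\ exists rho : R, D = (2 * rho) *: a 0%N 3%N)
    \/ (a 0%N 3%N = 0 /\ a 1%N 2%N = 0 /\ a 1%N 3%N = - a 0%N 2%N /\ a 0%N 2%N != 0
          /\ exists rho : R, D = (2 * rho) *: a 0%N 2%N))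
  (* (iii) *)
  /\ (ker_minus_nz B ->
       (a 0%N 3%N - a 1%N 2%N = 0 /\ a 0%N 2%N + a 1%N 3%N = 0
          /\ dot (a 1%N 2%N - a 0%N 3%N) D = 0 /\ dot (a 1%N 3%N + a 0%N 2%N) D = 0)
    \/ (a 0%N 2%N = 0 /\ a 1%N 3%N = 0 /\ a 1%N 2%N = - a 0%N 3%N /\ a 0%N 3%N != 0
          /\ exists rho : R, D = (2 * rho) *: a 0%N 3%N)
    \/ (a 0%N 3%N = 0 /\ a 1%N 2%N = 0 /\ a 1%N 3%N = a 0%N 2%N /\ a 0%N 2%N != 0
          /\ exists rho : R, D = (2 * rho) *: a 0%N 2%N))
  (* moreover: in cases (ii2),(ii3),(iii2),(iii3) *)
  /\ (((a 0%N 2%N = 0 /\ a 1%N 3%N = 0 /\ a 1%N 2%N = a 0%N 3%N /\ a 0%N 3%N != 0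
          /\ exists rho : R, D = (2 * rho) *: a 0%N 3%N)
       \/ (a 0%N 3%N = 0 /\ a 1%N 2%N = 0 /\ a 1%N 3%N = - a 0%N 2%N /\ a 0%N 2%N != 0
          /\ exists rho : R, D = (2 * rho) *: a 0%N 2%N)
       \/ (a 0%N 2%N = 0 /\ a 1%N 3%N = 0 /\ a 1%N 2%N = - a 0%N 3%N /\ a 0%N 3%N != 0
          /\ exists rho : R, D = (2 * rho) *: a 0%N 3%N)
       \/ (a 0%N 3%N = 0 /\ a 1%N 2%N = 0 /\ a 1%N 3%N = a 0%N 2%N /\ a 0%N 2%N != 0
          /\ exists rho : R, D = (2 * rho) *: a 0%N 2%N))
      -> normally_flat alpha /\ (1 <= dimN1 alpha <= 2)%N).
Proof.
cbv zeta.
set A := al alpha 0 0 in h1 h9 *; set P := al alpha 3 3 in h2 h9 *.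
set x := al alpha 0 2 in h6 h7 h8 h9 *; set y := al alpha 0 3 in h5 h7 h8 h9 *.
set z := al alpha 1 2 in h5 h7 h8 *; set w := al alpha 1 3 in h6 h7 h8 *.
have alE i j : (i < 4)%N -> (j < 4)%N -> al alpha i j = nform A P x y z w i j.
  have alC k l : al alpha k l = al alpha l k by rewrite /al hsym.
  by case: i => [|[|[|[|i]]]] // _; case: j => [|[|[|[|j]]]] // _;
    rewrite /= ?h1 ?h2 ?h3 ?h4 // alC ?h3 ?h4.
have [dot_yw dot_zw] := cross_dot_relations h7 h8.
have gauss : c = dot x x + dot y y - dot A P by move: h9; rewrite !nrm_sqr; lra.
have nrm_PA : nrm (A - P) = nrm (P - A) by rewrite -opprB nrmN.
have BP := mx3_Bmat_selfdual alE h5 h6 dot_yw dot_zw gauss.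
have BM := mx3_Bmat_antiselfdual alE h5 h6 dot_yw dot_zw gauss.
split; first by split.
split.
  rewrite nrm_PA in BP; move=> /(ker_plus_equations BP) [t1 [t2 [t3 [nz e1 e2 e3]]]].
  exact: selfdual_kernel_cases h5 h6 nz e1 e2 e3.
split.
  rewrite nrm_PA in BM; move=> /(ker_minus_equations BM) [t1 [t2 [t3 [nz e1 e2 e3]]]].
  exact: antiselfdual_kernel_cases h5 h6 nz e1 e2 e3.
exact: line_cases_normally_flat_dimN1 alE.
Qed.
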